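(* Semi-stable semantics is not serialisable: there is no selection function $\alpha$ and termination function $\beta$ such that $\mathrm{sst}(F)=\mathcal{E}^{\alpha,\beta}(F)$ for every abstract argumentation framework $F$.
   Context: An abstract argumentation framework (AF) is a pair $F=(A,R)$ with $A$ a finite subset of a fixed universal set of arguments $\mathfrak{A}$ and $R\subseteq A\times A$ ($a\to b$ means $(a,b)\in R$). For $S\subseteq A$: $S^+=\{a\mid \exists b\in S: b\to a\}$, $S^-=\{a\mid\exists b\in S: a\to b\}$; for sets $S,S'$, $S\to S'$ means $S^+\cap S'\neq\emptyset$. $S$ is admissible if it is conflict-free and every attacker of an element of $S$ is attacked by some element of $S$. A semi-stable extension is an admissible set $E$ such that $E\cup E^+$ is inclusion-maximal among all sets $E'\cup E'^+$ with $E'$ admissible; $\mathrm{sst}(F)$ is the set of semi-stable extensions. An initial set is a non-empty admissible set with no non-empty admissible proper subset; $\mathrm{IS}(F)$ is the set of initial sets. An initial set $S$ is unattacked if $S^-=\emptyset$; unchallenged if $S^-\neq\emptyset$ and no $S'\in\mathrm{IS}(F)$ has $S'\to S$; challenged if some $S'\in\mathrm{IS}(F)$ has $S'\to S$. Write $\mathrm{IS}^{u}(F),\mathrm{IS}^{uc}(F),\mathrm{IS}^{c}(F)$ for these sets. The reduct is $F^S=(A',R\cap(A'\times A'))$ with $A'=A\setminus(S\cup S^+)$. A selection function $\alpha$ maps any three sets $X,Y,Z$ of sets of arguments to a subset of $X\cup Y\cup Z$; a termination function $\beta$ maps pairs $(F,S)$ to $\{0,1\}$. Transitions: $(F,S)\to(F^{S'},S\cup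 S')$ whenever $S'\in\alpha(\mathrm{IS}^u(F),\mathrm{IS}^{uc}(F),\mathrm{IS}^c(F))$. $(F,S)\leadsto^{\alpha,\beta}(F',S')$ means $(F',S')$ is reachable from $(F,S)$ in finitely many (possibly zero) transitions and $\beta(F',S')=1$. $\mathcal{E}^{\alpha,\beta}(F)$ is the set of all $S$ with $(F,\emptyset)\leadsto^{\alpha,\beta}(F',S)$ for some $F'$. A semantics $\sigma$ is serialisable if there exist $\alpha,\beta$ with $\sigma(F)=\mathcal{E}^{\alpha,\beta}(F)$ for all AFs $F$. *)

From mathcomp Require Import all_boot finmap.
Set Implicit Arguments. Unset Strict Implicit. Unset Printing Implicit Defensive.
Local Open Scope fset_scope.

Notation arg := nat.
Notation argset := {fset arg}.

Definition setset := argset -> Prop.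

Record AF := mkAF { args : argset ; att : {fset (arg * arg)} }.

Definition wf_AF (F : AF) : Prop :=
  forall p, p \in att F -> p.1 \in args F /\ p.2 \in args F.

Definition splus (F : AF) (S : argset) : argset :=
  [fset p.2 | p in att F & p.1 \in S].
Definition sminus (F : AF) (S : argset) : argset :=
  [fset p.1 | p in att F & p.2 \in S].

Definition attacks_set (F : AF) (S S' : argset) : Prop :=
  splus F S `&` S' != fset0.

Definition conflict_free (F : AF) (S : argset) : Prop :=
  forall a b, a \in S -> b \in S -> (a, b) \notin att F.

Definition admissible (F : AF) (S : argset) : Prop :=
  S `<=` args F /\ conflict_free F S /\
  forall a b, b \in S -> (a, b) \in att F ->
    exists2 c, c \in S & (c, a) \in att F.

Definition sst (F : AF) (E : argset) : Prop :=
  admissible F E /\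
  forall E', admissible F E' -> E `|` splus F E `<=` E' `|` splus F E' ->
    E' `|` splus F E' `<=` E `|` splus F E.

Definition initial (F : AF) (S : argset) : Prop :=
  S != fset0 /\ admissible F S /\
  forall S', S' `<` S -> S' != fset0 -> ~ admissible F S'.

Definition IS_u (F : AF) : setset := fun S => initial F S /\ sminus F S = fset0.
Definition IS_uc (F : AF) : setset :=
  fun S => initial F S /\ sminus F S != fset0 /\
           forall S', initial F S' -> ~ attacks_set F S' S.
Definition IS_c (F : AF) : setset :=
  fun S => initial F S /\ exists2 S', initial F S' & attacks_set F S' S.

Definition reduct (F : AF) (S : argset) : AF :=
  let A' := args F `\` (S `|` splus F S) in
  mkAF A' [fset p in att F | (p.1 \in A') && (p.2 \in A')].

Definition selection := setset -> setset -> setset -> setset.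
Definition is_selection (alpha : selection) : Prop :=
  forall X Y Z S, alpha X Y Z S -> X S \/ Y S \/ Z S.
Definition termination := AF -> argset -> bool.

Inductive step (alpha : selection) : AF * argset -> AF * argset -> Prop :=
  | Step F S S' : alpha (IS_u F) (IS_uc F) (IS_c F) S' ->
      step alpha (F, S) (reduct F S', S `|` S').

Inductive reach (alpha : selection) : AF * argset -> AF * argset -> Prop :=
  | reach_refl c : reach alpha c c
  | reach_step c1 c2 c3 : step alpha c1 c2 -> reach alpha c2 c3 -> reach alpha c1 c3.

Definition ext_serial (alpha : selection) (beta : termination) (F : AF) : setset :=
  fun S => exists F', reach alpha (F, fset0) (F', S) /\ beta F' S = true.

Definition serialisable (sigma : AF -> setset) : Prop :=
  exists (alpha : selection) (beta : termination),
    is_selection alpha /\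
    forall F, wf_AF F -> forall S, sigma F S <-> ext_serial alpha beta F S.

(* Let F1 consist of the mutual attack 0 <-> 1 and the self-attacking argument 2,
   and let F2 add the attack 1 -> 2.  No admissible set contains the
   self-attacker 2, and 2 attacks nothing else, so both frameworks have the same
   admissible sets and the same initial sets {0} and {1}, classified alike; the
   extra attack disappears in the reduct by {0}, which removes 1.  A
   serialisation yielding {0} in F1 must select {0} first and then runs
   identically from the common reduct, so it yields {0} in F2 as well.  Yet {0}
   is semi-stable in F1, where no admissible set reaches 2, but not in F2, where
   {1} has the strictly larger range {0, 1, 2}. *)

From mathcomp Require Import all_boot finmap.
From Stdlib Require Import FunctionalExtensionality PropExtensionality.
Set Implicit Arguments. Unset Strict Implicit. Unset Printing Implicit Defensive.
Local Open Scope fset_scope.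

Lemma setset_ext (P Q : setset) : (forall S, P S <-> Q S) -> P = Q.
Proof.
by move=> PQ; apply: functional_extensionality => S; apply: propositional_extensionality.
Qed.

Lemma splusP F S b :
  reflect (exists2 a, a \in S & (a, b) \in att F) (b \in splus F S).
Proof.
apply: (iffP idP) => [/imfsetP[[a b'] /=]|[a aS ab]].
- by rewrite inE /= => /andP[ab aS] ->; exists a.
- by apply/imfsetP; exists (a, b); rewrite // inE /= ab aS.
Qed.

Lemma sminusP F S a :
  reflect (exists2 b, b \in S & (a, b) \in att F) (a \in sminus F S).
Proof.
apply: (iffP idP) => [/imfsetP[[a' b] /=]|[b bS ab]].
- by rewrite inE /= => /andP[ab bS] ->; exists b.
- by apply/imfsetP; exists (a, b); rewrite // inE /= ab bS.
Qed.

Lemma splus_congr F G S :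
  (forall a b, a \in S -> ((a, b) \in att F) = ((a, b) \in att G)) ->
  splus F S = splus G S.
Proof.
move=> eqFG; apply/fsetP => b.
by apply/splusP/splusP => -[a aS ab]; exists a; rewrite // ?eqFG // -eqFG.
Qed.

Lemma reduct_congr F G S :
  args F = args G -> splus F S = splus G S ->
  (forall a b, a \notin S `|` splus F S -> b \notin S `|` splus F S ->
     ((a, b) \in att F) = ((a, b) \in att G)) ->
  reduct F S = reduct G S.
Proof.
move=> eqA eqS eqR; rewrite /reduct -eqA -eqS; congr mkAF.
apply/fsetP => -[a b]; have := eqR a b; rewrite !inE /=.
by do 2![case: (_ || _) => /=]; rewrite ?andbF // => ->.
Qed.

Lemma reach_fsubset alpha c c' : reach alpha c c' -> c.2 `<=` c'.2.
Proof.
elim=> [//|_ _ c3 [F S S' _] _ /= IH]; exact: fsubset_trans (fsubsetUl S S') IH.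
Qed.

Lemma reach_first_step alpha F S c : reach alpha (F, S) c ->
  c = (F, S) \/
  exists2 S', alpha (IS_u F) (IS_uc F) (IS_c F) S' &
              reach alpha (reduct F S', S `|` S') c.
Proof.
move=> R; inversion R as [|c1 c2 c3 st R']; first by left.
by inversion st; subst; right; exists S'.
Qed.

Lemma selected_initial alpha F S :
  is_selection alpha -> alpha (IS_u F) (IS_uc F) (IS_c F) S -> initial F S.
Proof. by move=> sel /sel[[]|[[]|[]]]. Qed.

Lemma ext_serial_fset1_transfer alpha beta F G a :
  is_selection alpha ->
  IS_u F = IS_u G -> IS_uc F = IS_uc G -> IS_c F = IS_c G ->
  reduct F [fset a] = reduct G [fset a] ->
  ext_serial alpha beta F [fset a] -> ext_serial alpha beta G [fset a].
Proof.
move=> sel eq_u eq_uc eq_c eq_red [F' [R beta_F']]; exists F'; split=> //.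
case: (reach_first_step R) => [[_ /fsetP/(_ a)]|[S' selS' R']]; first by rewrite !inE eqxx.
have S'_a : S' = [fset a].
  have [S'_neq0 _] := selected_initial sel selS'.
  have := reach_fsubset R'.
  by rewrite /= fset0U fsubset1 (negPf S'_neq0) orbF => /eqP.
rewrite S'_a eq_u eq_uc eq_c eq_red in selS' R'.
exact: reach_step (Step fset0 selS') R'.
Qed.

Definition attacks_only_itself (F : AF) (x : arg) : Prop :=
  forall b, ((x, b) \in att F) = (b == x).

Definition attacks_agree_off (F G : AF) (x : arg) : Prop :=
  args F = args G /\ forall a b, b != x -> ((a, b) \in att F) = ((a, b) \in att G).

Lemma attacks_agree_off_sym F G x :
  attacks_agree_off F G x -> attacks_agree_off G F x.
Proof. by case=> eqA eqR; split=> // a b /eqR. Qed.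

Lemma conflict_free_self_attacker F S x :
  attacks_only_itself F x -> conflict_free F S -> x \notin S.
Proof. by move=> xx cf; apply/negP => xS; have := cf _ _ xS xS; rewrite xx eqxx. Qed.

Lemma attacks_agree_into F G x (S : argset) a b :
  attacks_agree_off F G x -> x \notin S -> b \in S ->
  ((a, b) \in att F) = ((a, b) \in att G).
Proof. by move=> FG xS bS; apply: FG.2; apply: contraNneq xS => <-. Qed.

Lemma admissible_agree_off F G x (S : argset) :
  attacks_agree_off F G x -> attacks_only_itself F x ->
  admissible F S -> admissible G S.
Proof.
move=> FG xF [sub [cf def]]; have xS := conflict_free_self_attacker xF cf.
split; first by rewrite -FG.1.
split=> [a b aS bS|a b bS]; first by rewrite -(attacks_agree_into _ FG xS bS) cf.
rewrite -(attacks_agree_into _ FG xS bS) => ab; have [c cS ca] := def a b bS ab.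
(* [a] attacks [b <> x] and [x] attacks only itself, so [a <> x]. *)
exists c => //; rewrite -FG.2 //; apply: contraNneq xS => ax.
by move: ab; rewrite ax xF => /eqP <-.
Qed.

Section SelfAttacker.

Variables (F G : AF) (x : arg).
Hypotheses (FG : attacks_agree_off F G x).
Hypotheses (xF : attacks_only_itself F x) (xG : attacks_only_itself G x).

Lemma initial_agree_off : initial F = initial G.
Proof.
have adm S : admissible F S <-> admissible G S.
  by split; [exact: admissible_agree_off FG xF |
              exact: admissible_agree_off (attacks_agree_off_sym FG) xG].
apply: setset_ext => S; rewrite /initial.
by split=> -[S_neq0 [/adm admS minS]]; do 2!split=> //;
  move=> S' ltS' S'_neq0 /adm; apply: minS.
Qed.

Lemma initial_notin S : initial G S -> x \notin S.
Proof. by case=> _ [[_ [cf _]] _]; exact: conflict_free_self_attacker xG cf. Qed.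

Lemma sminus_agree_off S : x \notin S -> sminus F S = sminus G S.
Proof.
move=> xS; apply/fsetP => a.
by apply/sminusP/sminusP => -[b bS ab]; exists b;
  rewrite // ?(attacks_agree_into _ FG xS bS) // -(attacks_agree_into _ FG xS bS).
Qed.

Lemma attacks_set_agree_off S' S :
  x \notin S -> attacks_set F S' S = attacks_set G S' S.
Proof.
move=> xS; rewrite /attacks_set; congr (is_true (_ != _)).
apply/fsetP => b; rewrite !inE; case bS: (b \in S); rewrite ?andbF ?andbT //.
by apply/splusP/splusP => -[a aS ab]; exists a;
  rewrite // ?(attacks_agree_into _ FG xS bS) // -(attacks_agree_into _ FG xS bS).
Qed.

Lemma IS_u_agree_off : IS_u F = IS_u G.
Proof.
apply: setset_ext => S; rewrite /IS_u initial_agree_off.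
by split=> -[iS]; rewrite (sminus_agree_off (initial_notin iS)).
Qed.

Lemma IS_uc_agree_off : IS_uc F = IS_uc G.
Proof.
apply: setset_ext => S; rewrite /IS_uc initial_agree_off.
split=> -[iS [attacked unch]]; have xS := initial_notin iS.
- rewrite -sminus_agree_off //; split=> //; split=> // S'.
  by rewrite -attacks_set_agree_off //; exact: unch.
- rewrite sminus_agree_off //; split=> //; split=> // S'.
  by rewrite attacks_set_agree_off //; exact: unch.
Qed.

Lemma IS_c_agree_off : IS_c F = IS_c G.
Proof.
apply: setset_ext => S; rewrite /IS_c initial_agree_off.
split=> -[iS [S' iS' S'_S]]; have xS := initial_notin iS; split=> //; exists S'=> //.
- by rewrite -attacks_set_agree_off.
- by rewrite attacks_set_agree_off.
Qed.

End SelfAttacker.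

Definition F1 : AF := mkAF [fset 0; 1; 2] [fset (0, 1); (1, 0); (2, 2)].
Definition F2 : AF := mkAF [fset 0; 1; 2] [fset (0, 1); (1, 0); (1, 2); (2, 2)].

Lemma att_F1 a b : ((a, b) \in att F1) =
  [|| (a == 0) && (b == 1), (a == 1) && (b == 0) | (a == 2) && (b == 2)].
Proof. by rewrite !inE !xpair_eqE; case: a => [|[|[|a]]]; case: b => [|[|[|b]]]. Qed.

Lemma att_F2 a b : ((a, b) \in att F2) = ((a, b) \in att F1) || (a == 1) && (b == 2).
Proof. by rewrite att_F1 !inE !xpair_eqE; case: a => [|[|[|a]]]; case: b => [|[|[|b]]]. Qed.

Lemma wf_F1 : wf_AF F1.
Proof. by move=> [a b]; rewrite att_F1 !inE; case: a => [|[|[|a]]]; case: b => [|[|[|b]]]. Qed.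

Lemma wf_F2 : wf_AF F2.
Proof. by move=> [a b]; rewrite att_F2 att_F1 !inE; case: a => [|[|[|a]]]; case: b => [|[|[|b]]]. Qed.

Lemma F1_only_2 : attacks_only_itself F1 2.
Proof. by move=> b; rewrite att_F1; case: b => [|[|[|b]]]. Qed.

Lemma F2_only_2 : attacks_only_itself F2 2.
Proof. by move=> b; rewrite att_F2 att_F1; case: b => [|[|[|b]]]. Qed.

Lemma F1_F2_agree_off : attacks_agree_off F1 F2 2.
Proof. by split=> // a b b_neq2; rewrite att_F2 (negPf b_neq2) andbF orbF. Qed.

Lemma reduct_F1_F2 : reduct F1 [fset 0] = reduct F2 [fset 0].
Proof.
have splus0 : splus F1 [fset 0] = splus F2 [fset 0].
  by apply: splus_congr => a b /fset1P ->; rewrite att_F2 orbF.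
apply: reduct_congr => // a b a_out _; rewrite att_F2.
suff /negPf -> : a != 1 by rewrite orbF.
apply: contraNneq a_out => ->; apply/fsetUP; right.
by apply/splusP; exists 0; rewrite ?inE // att_F1.
Qed.

Lemma admissible_F1_range E : admissible F1 E -> E `|` splus F1 E `<=` [fset 0; 1].
Proof.
move=> [sub [cf _]]; have E2 := conflict_free_self_attacker F1_only_2 cf.
apply/fsubsetP => b /fsetUP[bE|/splusP[a aE]].
- have := fsubsetP sub b bE; rewrite !inE.
  by case: b bE => [|[|[|b]]] // bE; rewrite bE in E2.
- rewrite att_F1 !inE.
  by case: a aE => [|[|[|a]]] aE; case: b => [|[|[|b]]] //; rewrite aE in E2.
Qed.

Lemma sst_F1 : sst F1 [fset 0].
Proof.
have adm0 : admissible F1 [fset 0].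
  split; first by apply/fsubsetP => a /fset1P ->; rewrite !inE.
  split=> [a b /fset1P -> /fset1P ->|a b /fset1P -> ab]; first by rewrite att_F1.
  by exists 0; rewrite ?inE //; move: ab; rewrite !att_F1; case: a => [|[|[|a]]].
split=> // E admE _; apply: fsubset_trans (admissible_F1_range admE) _.
apply/fsubsetP => b; rewrite !inE => /orP[]/eqP-> //=.
by apply/splusP; exists 0; rewrite ?inE // att_F1.
Qed.

Lemma not_sst_F2 : ~ sst F2 [fset 0].
Proof.
move=> [_ maxF2].
have adm1 : admissible F2 [fset 1].
  split; first by apply/fsubsetP => a /fset1P ->; rewrite !inE.
  split=> [a b /fset1P -> /fset1P ->|a b /fset1P -> ab]; first by rewrite att_F2 att_F1.
  by exists 1; rewrite ?inE //; move: ab; rewrite !att_F2 !att_F1; case: a => [|[|[|a]]].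
have range1 b : b \in [fset 0; 1; 2] -> b \in [fset 1] `|` splus F2 [fset 1].
  move=> b3; apply/fsetUP; case: (b =P 1) => [->|/eqP b_neq1]; first by left; rewrite inE.
  right; apply/splusP; exists 1; first by rewrite inE.
  by move: b3 b_neq1; rewrite att_F2 att_F1 !inE; case: b => [|[|[|b]]].
have sub : [fset 0] `|` splus F2 [fset 0] `<=` [fset 1] `|` splus F2 [fset 1].
  apply/fsubsetP => b /fsetUP[/fset1P->|/splusP[a /fset1P-> ab]]; apply: range1.
    by rewrite !inE.
  by move: ab; rewrite att_F2 att_F1 !inE; case: b => [|[|[|b]]].
have in_range1 : 2 \in [fset 1] `|` splus F2 [fset 1] by apply: range1; rewrite !inE.
have /fsetUP[] := fsubsetP (maxF2 _ adm1 sub) 2 in_range1; first by rewrite inE.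
by case/splusP => a /fset1P->; rewrite att_F2 att_F1.
Qed.

Theorem theorem9 : ~ serialisable sst.
Proof.
move=> [alpha [beta [sel sem]]].
apply: not_sst_F2; apply/(sem F2 wf_F2).
have agree := F1_F2_agree_off.
apply: (ext_serial_fset1_transfer sel
          (IS_u_agree_off agree F1_only_2 F2_only_2)
          (IS_uc_agree_off agree F1_only_2 F2_only_2)
          (IS_c_agree_off agree F1_only_2 F2_only_2) reduct_F1_F2).
exact: (sem F1 wf_F1 _).1 sst_F1.
Qed.
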